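(* Let $f:\mathbb{R}^n\to\mathbb{R}$ be continuously differentiable, let $s$ be an integer with $0<s<n$, and let $L>0$. Then $\mathbf{x}^*\in\mathbb{R}^n$ satisfies $\mathbf{x}^*\in C_s$ and $\mathbf{x}^*\in P_{C_s}\!\left(\mathbf{x}^*-\frac{1}{L}\nabla f(\mathbf{x}^* )\right)$ if and only if $\|\mathbf{x}^*\|_0\le s$ and $$|\nabla_i f(\mathbf{x}^* )|\ \begin{cases}\le L\,M_s(\mathbf{x}^* ) & \text{if } i\in I_0(\mathbf{x}^* ),\\ =0 & \text{if } i\in I_1(\mathbf{x}^* ).\end{cases}$$
   Context: $\|\mathbf{x}\|_0$ is the number of nonzero components of $\mathbf{x}$ and $C_s=\{\mathbf{x}:\|\mathbf{x}\|_0\le s\}$. $I_1(\mathbf{x})=\{i:x_i\neq0\}$ and $I_0(\mathbf{x})=\{i:x_i=0\}$. $M_i(\mathbf{x})$ denotes the $i$-th largest absolute value among the components of $\mathbf{x}$ (so $M_1(\mathbf{x})\ge\dots\ge M_n(\mathbf{x})$). For a closed set $D$, $P_D(\mathbf{y})=\operatorname{argmin}_{\mathbf{x}\in D}\|\mathbf{x}-\mathbf{y}\|^2$ is the (possibly multi-valued) set of orthogonal projections of $\mathbf{y}$ onto $D$; in particular $P_{C_s}(\mathbf{y})$ is the set of vectors obtained by keeping $s$ components of $\mathbf{y}$ of largest absolute value and setting the rest to zero. *)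

From HB Require Import structures.
From mathcomp Require Import all_boot all_order all_algebra.
From mathcomp Require Import all_classical all_reals all_analysis.
Set Implicit Arguments. Unset Strict Implicit. Unset Printing Implicit Defensive.
Import Order.TTheory GRing.Theory Num.Theory.
Import numFieldNormedType.Exports.
Local Open Scope ring_scope.
Local Open Scope classical_set_scope.

(* Vectors of R^n are row vectors 'rV[R]_n; component i is x 0 i. *)

Definition l0norm {R : realType} {n : nat} (x : 'rV[R]_n) : nat :=
  #|[set i : 'I_n | x 0 i != 0]|.

Definition Cs {R : realType} (n s : nat) : set 'rV[R]_n :=
  [set x | (l0norm x <= s)%N].

Arguments Cs {R} n s _.

Definition sqdist {R : realType} {n : nat} (x y : 'rV[R]_n) : R :=
  \sum_(i < n) (x 0 i - y 0 i) ^+ 2.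

Definition proj_set {R : realType} {n : nat} (D : set 'rV[R]_n) (y : 'rV[R]_n)
  : set 'rV[R]_n :=
  [set x | D x /\ forall z, D z -> sqdist x y <= sqdist z y].

(* M_k(x) : the k-th largest absolute value among components (k is 1-based) *)
Definition Mk {R : realType} {n : nat} (k : nat) (x : 'rV[R]_n) : R :=
  nth 0 (sort (fun a b : R => b <= a) [seq `|x 0 i| | i <- enum 'I_n]) k.-1.

Definition partial {R : realType} {n : nat} (f : 'rV[R]_n -> R) (i : 'I_n)
  (x : 'rV[R]_n) : R :=
  'D_(delta_mx 0 i) f x.

Definition grad {R : realType} {n : nat} (f : 'rV[R]_n -> R) (x : 'rV[R]_n)
  : 'rV[R]_n := \row_i partial f i x.

Definition C1 {R : realType} {n : nat} (f : 'rV[R]_n -> R) : Prop :=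
  (forall x, differentiable f x) /\ (forall i, continuous (partial f i)).

From HB Require Import structures.
From mathcomp Require Import all_boot all_order all_algebra.
From mathcomp Require Import all_classical all_reals all_analysis.
From mathcomp Require Import zify lra.
Import Order.TTheory GRing.Theory Num.Theory.
Import numFieldNormedType.Exports.
Local Open Scope ring_scope.

(* A point x of C_s is a projection of y onto C_s exactly when x agrees with
   y on its support and no off-support entry of y is larger in absolute value
   than M_s(x): replacing the support entry x_j by 0 and the off-support entry
   x_i by y_i changes the squared distance by x_j^2 - y_i^2, and when
   ||x||_0 < s the entry y_i can even be added for free.  Conversely such an x
   keeps the s largest entries of y, which an exchange argument shows to be
   optimal.  The theorem is this characterisation for y = x - grad f(x) / L. *)

Section SortedCount.
Variables (d : Order.disp_t) (T : orderType d).

Lemma sorted_ge_count_ge (x0 : T) (l : seq T) k :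
  sorted >=%O l -> (k < size l)%N -> (k.+1 <= count (>= nth x0 l k)%O l)%N.
Proof.
move=> l_sorted k_lt; rewrite -[X in count _ X](cat_take_drop k.+1 l) count_cat.
apply: leq_trans (leq_addr _ _).
have -> : count (>= nth x0 l k)%O (take k.+1 l) = size (take k.+1 l).
  apply/eqP; rewrite -all_count; apply/(all_nthP x0) => i.
  rewrite size_takel // => i_le_k; rewrite nth_take //.
  apply: (sorted_leq_nth ge_trans) => //; rewrite ?inE ?size_takel //.
    exact: lexx.
  exact: leq_trans i_le_k k_lt.
by rewrite size_takel.
Qed.

Lemma sorted_ge_count_gt (x0 : T) (l : seq T) k :
  sorted >=%O l -> (count (> nth x0 l k)%O l <= k)%N.
Proof.
move=> l_sorted; rewrite -[X in count _ X](cat_take_drop k l) count_cat.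
have -> : count (> nth x0 l k)%O (drop k l) = 0%N.
  apply/eqP; rewrite -leqn0 leqNgt -has_count; apply/(has_nthP x0) => -[i].
  rewrite size_drop nth_drop ltNge ltn_subRL => ki_lt; apply/negP/negPn.
  apply: (sorted_leq_nth ge_trans) => //; rewrite ?inE ?leq_addr //.
    exact: lexx.
  exact: leq_ltn_trans (leq_addr i k) ki_lt.
by rewrite addn0 (leq_trans (count_size _ _)) // size_take_min geq_minl.
Qed.

End SortedCount.

Lemma ler_sqr_norm (R : realDomainType) (a b : R) :
  (a ^+ 2 <= b ^+ 2) = (`|a| <= `|b|).
Proof. by rewrite -[in RHS]ler_sqr ?inE ?normr_ge0 // !real_normK ?num_real. Qed.

Lemma sum_compl_le {R : numDomainType} {I : finType} (c : R) (S T : {set I}) (w : I -> R) :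
  (#|S| <= #|T|)%N -> 0 <= c ->
  (forall i, i \notin T -> w i <= c) -> (forall i, i \in T -> c <= w i) ->
  \sum_(i in ~: T) w i <= \sum_(i in ~: S) w i.
Proof.
move=> card_le c_ge0 w_le w_ge.
rewrite (big_setID S) [X in _ <= X](big_setID T) /=.
have -> : ~: T :\: S = ~: S :\: T by apply/setP => i; rewrite !inE andbC.
apply: lerD => //.
have card_ex : (#|~: T :&: S| <= #|~: S :&: T|)%N.
  rewrite ![~: _ :&: _]finset.setIC -!finset.setDE.
  have := cardsID T S; have := cardsID S T; rewrite [T :&: S]finset.setIC; lia.
apply: (@le_trans _ _ (c *+ #|~: T :&: S|)).
  by rewrite -sumr_const; apply: ler_sum => i; rewrite !inE => /andP [/w_le].
apply: (@le_trans _ _ (c *+ #|~: S :&: T|)); first exact: ler_wpMn2l.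
by rewrite -sumr_const; apply: ler_sum => i; rewrite !inE => /andP [_ /w_ge].
Qed.

Section SparseProjection.
Variables (R : realType) (n : nat).
Implicit Types (x y z : 'rV[R]_n) (i j : 'I_n).

Definition supp x : {set 'I_n} := [set i | x 0 i != 0].

Lemma l0normE x : l0norm x = #|supp x|.
Proof. by apply: eq_card => i; rewrite !inE /in_mem /= /in_set asboolb. Qed.

Lemma count_sort_abs x (P : pred R) :
  count P (sort >=%O [seq `|x 0 i| | i <- enum 'I_n]) = #|[set i | P `|x 0 i|]|.
Proof.
rewrite count_sort count_map cardE /enum_mem size_filter /= /enum_mem filter_predT.
by apply: eq_count => i; rewrite /= inE.
Qed.

Variable s : nat.
Hypotheses (s_gt0 : (0 < s)%N) (s_le_n : (s <= n)%N).

Let abs_seq x := sort >=%O [seq `|x 0 i| | i <- enum 'I_n].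

Let MkE x : Mk s x = nth 0 (abs_seq x) s.-1.
Proof. by []. Qed.

Let abs_seq_sorted x : sorted >=%O (abs_seq x).
Proof. by apply: sort_sorted => a b; rewrite orbC le_total. Qed.

Let index_lt x : (s.-1 < size (abs_seq x))%N.
Proof. by rewrite size_sort size_map size_enum_ord prednK. Qed.

Lemma Mk_mem x : exists j, Mk s x = `|x 0 j|.
Proof.
have : Mk s x \in [seq `|x 0 i| | i <- enum 'I_n].
  by rewrite MkE -(mem_sort >=%O) mem_nth.
by case/mapP => j _ ->; exists j.
Qed.

Lemma Mk_ge0 x : 0 <= Mk s x.
Proof. by have [j ->] := Mk_mem x. Qed.

Lemma Mk_count_ge x : (s <= #|[set i | (Mk s x <= `|x 0 i|)%R]|)%N.
Proof.
rewrite -(count_sort_abs x (>= Mk s x)%O) -[X in (X <= _)%N]prednK //.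
exact: sorted_ge_count_ge (abs_seq_sorted x) (index_lt x).
Qed.

Lemma Mk_count_gt x : (#|[set i | (Mk s x < `|x 0 i|)%R]| < s)%N.
Proof.
rewrite -(count_sort_abs x (> Mk s x)%O) -[X in (_ < X)%N]prednK // ltnS.
exact: sorted_ge_count_gt (abs_seq_sorted x).
Qed.

Lemma abs_ge_sub_supp x {c : R} : 0 < c -> [set i | c <= `|x 0 i|] \subset supp x.
Proof.
move=> c_gt0; apply/fintype.subsetP => i; rewrite !inE => c_le.
by rewrite -normr_gt0 (lt_le_trans c_gt0).
Qed.

Lemma Mk_small_support x : (l0norm x < s)%N -> Mk s x = 0.
Proof.
move=> lt_s; apply/eqP; rewrite eq_le Mk_ge0 andbT leNgt; apply/negP => M_gt0.
have := leq_trans (Mk_count_ge x) (subset_leq_card (abs_ge_sub_supp x M_gt0)).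
by rewrite -l0normE leqNgt lt_s.
Qed.

Lemma Mk_le_support x j : (l0norm x <= s)%N -> x 0 j != 0 -> Mk s x <= `|x 0 j|.
Proof.
move=> le_s xj_neq0; rewrite leNgt; apply/negP => xj_lt.
have M_gt0 : 0 < Mk s x by apply: le_lt_trans xj_lt.
have : (#|[set i | (Mk s x <= `|x 0 i|)%R]| < #|supp x|)%N.
  apply: proper_card; apply/fintype.properP; split; first exact: abs_ge_sub_supp.
  by exists j; rewrite !inE // -ltNge.
by rewrite -l0normE ltnNge (leq_trans le_s (Mk_count_ge x)).
Qed.

Lemma Mk_support_min x : (s <= l0norm x)%N ->
  exists2 j, x 0 j != 0 & `|x 0 j| <= Mk s x.
Proof.
move=> ge_s; have : ~~ (supp x \subset [set i | Mk s x < `|x 0 i|]).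
  apply/negP => /subset_leq_card; rewrite -l0normE leqNgt.
  by rewrite (leq_trans (Mk_count_gt x)).
by case/fintype.subsetPn => j; rewrite !inE -leNgt => ? ?; exists j.
Qed.

Definition upd x i (v : R) : 'rV[R]_n := \row_k (if k == i then v else x 0 k).

Lemma updE x i v k : upd x i v 0 k = if k == i then v else x 0 k.
Proof. by rewrite mxE. Qed.

Lemma sqdist_upd x y i v :
  sqdist (upd x i v) y = sqdist x y + ((v - y 0 i) ^+ 2 - (x 0 i - y 0 i) ^+ 2).
Proof.
rewrite /sqdist (bigD1 i) //= [in RHS](bigD1 i) //= updE eqxx.
rewrite (eq_bigr (fun k => (x 0 k - y 0 k) ^+ 2)) => [|k /negbTE k_neq].
  by rewrite [RHS]addrC addrA subrK.
by rewrite updE k_neq.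
Qed.

Lemma l0norm_upd x i v :
  (l0norm (upd x i v) + (x 0 i != 0)%R = l0norm x + (v != 0)%R)%N.
Proof.
rewrite !l0normE (cardsD1 i (supp (upd x i v))) (cardsD1 i (supp x)) !inE updE eqxx.
have -> : supp (upd x i v) :\ i = supp x :\ i.
  by apply/setP => k; rewrite !inE updE; case: (k == i).
set rest := #|supp x :\ i|; lia.
Qed.

Lemma sqdist_ge_off_support z y :
  \sum_(i in ~: supp z) y 0 i ^+ 2 <= sqdist z y.
Proof.
rewrite /sqdist big_mkcond /=; apply: ler_sum => i _; rewrite !inE negbK.
have [zi0|_] := eqVneq (z 0 i) 0; first by rewrite zi0 sub0r sqrrN.
exact: sqr_ge0.
Qed.

Lemma sqdist_fixed_support x y : (forall i, x 0 i != 0 -> x 0 i = y 0 i) ->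
  sqdist x y = \sum_(i in ~: supp x) y 0 i ^+ 2.
Proof.
move=> on_supp; rewrite /sqdist [RHS]big_mkcond /=; apply: eq_bigr => i _.
rewrite !inE negbK; have [xi0|xi_neq0] := eqVneq (x 0 i) 0.
  by rewrite xi0 sub0r sqrrN.
by rewrite on_supp // subrr expr0n.
Qed.

Section Necessity.
Variables x y : 'rV[R]_n.
Hypothesis x_proj : proj_set (Cs n s) y x.

Lemma proj_upd_le i v : (l0norm (upd x i v) <= s)%N ->
  (x 0 i - y 0 i) ^+ 2 <= (v - y 0 i) ^+ 2.
Proof. by move=> /x_proj.2; rewrite sqdist_upd lerDl subr_ge0. Qed.

Lemma proj_Cs_support i : x 0 i != 0 -> x 0 i = y 0 i.
Proof.
move=> xi_neq0; have l0x : (l0norm x <= s)%N := x_proj.1.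
have : (x 0 i - y 0 i) ^+ 2 <= (y 0 i - y 0 i) ^+ 2.
  apply: proj_upd_le; have := l0norm_upd x i (y 0 i).
  have := leq_b1 (y 0 i != 0); rewrite xi_neq0; lia.
by rewrite subrr ler_sqr_norm normr0 normr_le0 subr_eq0 => /eqP.
Qed.

Lemma proj_Cs_off_support i : x 0 i = 0 -> `|y 0 i| <= Mk s x.
Proof.
move=> xi0; have l0x : (l0norm x <= s)%N := x_proj.1.
have [lt_s|ge_s] := ltnP (l0norm x) s.
  have : (x 0 i - y 0 i) ^+ 2 <= (y 0 i - y 0 i) ^+ 2.
    apply: proj_upd_le; have := l0norm_upd x i (y 0 i).
    have := leq_b1 (y 0 i != 0); rewrite xi0 eqxx; lia.
  rewrite xi0 sub0r sqrrN subrr ler_sqr_norm normr0 normr_le0 => /eqP ->.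
  by rewrite normr0 Mk_ge0.
have [j xj_neq0 xj_le] := Mk_support_min _ ge_s.
have ij : i != j by apply: contra_neq xj_neq0 => <-; rewrite xi0.
have z_sparse : (l0norm (upd (upd x j 0) i (y 0 i))%R <= s)%N.
  have := l0norm_upd (upd x j 0) i (y 0 i); have := l0norm_upd x j 0.
  have := leq_b1 (y 0 i != 0).
  rewrite updE (negbTE ij) xi0 xj_neq0 !eqxx; lia.
have := x_proj.2 _ z_sparse.
rewrite !sqdist_upd updE (negbTE ij) xi0 -(proj_Cs_support _ xj_neq0) !subrr.
rewrite sub0r sqrrN sub0r sqrrN expr0n /= => le_z.
apply: le_trans xj_le; rewrite -ler_sqr_norm; lra.
Qed.

End Necessity.

Lemma proj_Cs_of_fixed x y : (l0norm x <= s)%N ->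
  (forall i, x 0 i != 0 -> x 0 i = y 0 i) ->
  (forall i, x 0 i = 0 -> `|y 0 i| <= Mk s x) -> proj_set (Cs n s) y x.
Proof.
move=> l0x on_supp off_supp; split=> // z z_sparse.
rewrite (sqdist_fixed_support _ _ on_supp); apply: le_trans (sqdist_ge_off_support z y).
have [lt_s|ge_s] := ltnP (l0norm x) s.
  rewrite big1 => [|i]; first by apply: sumr_ge0 => i _; exact: sqr_ge0.
  rewrite !inE negbK => /eqP /off_supp; rewrite Mk_small_support // normr_le0.
  by move=> /eqP ->; rewrite expr0n.
apply: (sum_compl_le (Mk s x ^+ 2)); rewrite ?sqr_ge0 //.
- by rewrite -!l0normE (leq_trans z_sparse).
- move=> i; rewrite !inE negbK => /eqP /off_supp le_M.
  by rewrite ler_sqr_norm (ger0_norm (Mk_ge0 x)).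
- move=> i; rewrite !inE => xi_neq0; rewrite -on_supp // ler_sqr_norm.
  by rewrite (ger0_norm (Mk_ge0 x)) Mk_le_support.
Qed.

Lemma proj_CsP x y :
  proj_set (Cs n s) y x <->
  (l0norm x <= s)%N /\
  forall i, (x 0 i = 0 -> `|y 0 i| <= Mk s x) /\ (x 0 i != 0 -> x 0 i = y 0 i).
Proof.
split=> [x_proj|[l0x fixed]].
  split=> [|i]; first exact: x_proj.1.
  by split; [exact: proj_Cs_off_support | exact: proj_Cs_support].
by apply: proj_Cs_of_fixed => // i; have [] := fixed i.
Qed.

End SparseProjection.

Theorem lemma2p2 (R : realType) (n s : nat) (f : 'rV[R]_n -> R) (L : R)
  (xs : 'rV[R]_n) :
  C1 f -> (0 < s)%N -> (s < n)%N -> 0 < L ->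
  (Cs n s xs /\ proj_set (Cs n s) (xs - L^-1 *: grad f xs) xs) <->
  ((l0norm xs <= s)%N /\
   forall i : 'I_n,
     (xs 0 i = 0 -> `|grad f xs 0 i| <= L * Mk s xs) /\
     (xs 0 i != 0 -> `|grad f xs 0 i| = 0)).
Proof.
move=> _ s_gt0 /ltnW s_le_n L_gt0.
set g := grad f xs; set y := xs - L^-1 *: g.
have yE i : y 0 i = xs 0 i - L^-1 * g 0 i by rewrite !mxE.
have fixedE i : (xs 0 i = y 0 i) <-> (`|g 0 i| = 0).
  rewrite yE; split=> [xi_eq|/normr0_eq0 ->]; last by rewrite mulr0 subr0.
  have /eqP : L^-1 * g 0 i = 0 by lra.
  by rewrite mulf_eq0 invr_eq0 gt_eqF //= => /eqP ->; rewrite normr0.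
have offE i : xs 0 i = 0 -> (`|y 0 i| <= Mk s xs) = (`|g 0 i| <= L * Mk s xs).
  by move=> xi0; rewrite yE xi0 sub0r normrN normrM gtr0_norm ?invr_gt0 // ler_pdivrMl.
have projP := @proj_CsP R n s s_gt0 s_le_n xs y.
split=> [[_ /projP [l0x fixed]]|[l0x grad_cond]].
  split=> // i; have [off on] := fixed i.
  by split=> [xi0|/on /fixedE //]; rewrite -offE // off.
have x_proj : proj_set (Cs n s) y xs.
  apply/projP; split=> // i; have [off on] := grad_cond i.
  by split=> [xi0|/on /fixedE //]; rewrite offE // off.
by split; first exact: x_proj.1.
Qed.
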